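(* Let $u:\Sigma\to M$ be a smooth $(j,J)$-holomorphic map and $z_0\in\Sigma$ with $j^ku(z_0)=0$ for some $k\ge 1$. Let $z=s+it$ be a complex coordinate on $\Sigma$ centered at $z_0$ and $(w_1,\dots,w_n)$, $w_m=x_m+\sqrt{-1}y_m$, coordinates on $M$ centered at $p_0=u(z_0)$ with $J\,\partial/\partial x_m|_{p_0}=\partial/\partial y_m|_{p_0}$ and $J\,\partial/\partial y_m|_{p_0}=-\partial/\partial x_m|_{p_0}$ for all $m$. Then $$u(z)=\vec a_{k+1}z^{k+1}+o(|z|^{k+1})$$ for some $\vec a_{k+1}\in T_{p_0}M\cong\mathbb C^n$. Equivalently, $d^{k+1}u(z_0)=\vec a\cdot dz^{\otimes(k+1)}$ with $\vec a\in T_{u(z_0)}M$. In particular the principal jet of $u$ at $z_0$ is holomorphic (lies in $H^{(k+1,0)}_{(z_0,u(z_0))}$), and at every point of $\Sigma$ the ramification degree of $u$ equals its holomorphic ramification degree.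
   Context: $(M,J)$ is an almost complex manifold of real dimension $2n$, $(\Sigma,j)$ a Riemann surface. $u$ is $(j,J)$-holomorphic if $J\circ du=du\circ j$. For a smooth map $u$ and $z\in\Sigma$, $j^ku(z)=0$ means that all derivatives of $u$ of orders $1,\dots,k$ vanish at $z$ (in local coordinates; this condition is coordinate independent). When $j^ku(z)=0$, the $(k+1)$-st derivative $d^{k+1}u(z)$ is a well-defined symmetric $(k+1)$-linear map $T_z\Sigma\to T_{u(z)}M$. The space $\mathrm{Sym}^\ell(T_z\Sigma,T_xM)$ of symmetric $\ell$-linear maps splits, relative to $(j_z,J_x)$, into the holomorphic part $H^{(\ell,0)}_{(z,x)}$ (maps that are complex multilinear, i.e. $L(jv_1,v_2,\dots)=J_xL(v_1,v_2,\dots)$), the antiholomorphic part and mixed parts; $\pi^{hol}$ denotes projection onto $H^{(\ell,0)}$. The ramification degree of $u$ at $z$ is the $k$ with $j^ku(z)=0$, $j^{k+1}u(z)\neq0$ (degree $0$ at immersed points), and $j^{k+1}u(z)$ is then called the principal jet. The holomorphic ramification degree is defined the same way using the holomorphic jets $j^\ell_{hol}u(z)=(\pi^{hol}(d^mu(z)))_{m\le\ell}$ instead of $j^\ell u(z)$. *)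

From Stdlib Require Import Reals Lra Lia List Factorial.
Open Scope R_scope.

(* Points of R^d are represented as functions nat -> R; only the
   coordinates i < d are meaningful. *)

Definition setc (x : nat -> R) (i : nat) (y : R) : nat -> R :=
  fun j => if Nat.eqb j i then y else x j.

(* Open cube of radius r around 0 in R^d (an open neighbourhood of 0). *)
Definition ball (d : nat) (r : R) (x : nat -> R) : Prop :=
  forall i, (i < d)%nat -> Rabs (x i) < r.

Definition cont_at (d : nat) (f : (nat -> R) -> R) (x : nat -> R) : Prop :=
  forall eps, 0 < eps -> exists delta, 0 < delta /\
    forall y, (forall i, (i < d)%nat -> Rabs (y i - x i) < delta) ->
      Rabs (f y - f x) < eps.

Definition is_partials (d : nat) (U : (nat -> R) -> Prop)
    (f : (nat -> R) -> R) (D : list nat -> (nat -> R) -> R) : Prop :=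
  (forall x, U x -> D nil x = f x) /\
  (forall l x i, U x -> (i < d)%nat ->
     derivable_pt_lim (fun y => D l (setc x i y)) (x i) (D (i :: l) x)) /\
  (forall l x, U x -> cont_at d (D l) x).

Definition smooth_on (d : nat) (U : (nat -> R) -> Prop)
    (f : (nat -> R) -> R) : Prop :=
  exists D, is_partials d U f D.

Definition ucomp (u : R -> R -> nat -> R) (i : nat) : (nat -> R) -> R :=
  fun x => u (x 0%nat) (x 1%nat) i.

Definition zerov : nat -> R := fun _ => 0.

Fixpoint rsum (N : nat) (f : nat -> R) : R :=
  match N with O => 0 | S N' => rsum N' f + f N' end.

(* Coordinates on R^{2n}: index 2m is x_m, index 2m+1 is y_m.
   J0 is the standard complex structure: J0 d/dx_m = d/dy_m,
   J0 d/dy_m = - d/dx_m  (J0 i l = entry in row i, column l). *)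
Definition J0 (i l : nat) : R :=
  if Nat.eqb (Nat.div2 i) (Nat.div2 l) then
    (if andb (Nat.even l) (negb (Nat.even i)) then 1
     else if andb (negb (Nat.even l)) (Nat.even i) then -1 else 0)
  else 0.

Definition deltaR (i l : nat) : R := if Nat.eqb i l then 1 else 0.

Definition cmul (a b : R * R) : R * R :=
  (fst a * fst b - snd a * snd b, fst a * snd b + snd a * fst b).

Fixpoint cpow (s t : R) (p : nat) : R * R :=
  match p with
  | O => (1, 0)
  | S p' => cmul (cpow s t p') (s, t)
  end.

(* number of occurrences of direction 1 (= d/dt) in a list of directions *)
Definition count_t (l : list nat) : nat := count_occ Nat.eq_dec l 1%nat.

From Stdlib Require Import Reals List Factorial.
From Stdlib Require Import Lra Lia FunctionalExtensionality IndefiniteDescription.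
Import ListNotations.
Open Scope R_scope.

(* Each coordinate u_i of u, as a function of
   (s, t), is described by the family G i l of its iterated partial derivatives, indexed by
   the list l of directions (0 = d/ds, 1 = d/dt).

   For any family of continuous partial derivatives we prove
      first-order Taylor, the chain rule along rays, Schwarz' lemma (so a derivative only
      depends on its order and on its number of d/dt), and Taylor's theorem at the origin
      when all derivatives of lower order vanish there.
   2. If the derivatives of order < N of a function vanish at 0 and the function is
      o(|z|^N), its derivatives of order N vanish too: its Taylor term is homogeneous of
      degree N and small, hence zero, and its coefficients are those of a polynomial.
   3. Holomorphy says d/dt u = J(u) d/ds u.  As J(u(z)) = J0 + o(1) and d/ds u = O(|z|^k),
      the defect d/dt u - J0 d/ds u is o(|z|^k); by 2 the derivatives of order k+1 of u at 0
      satisfy the Cauchy-Riemann equations for J0.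
   4. By symmetry the (k+1)-jet is given by the numbers Z_q = X_q + i Y_q (q directions d/dt),
      and Cauchy-Riemann gives Z_(q+1) = i Z_q; hence d^(k+1) u(0) = (k+1)! a dz^(k+1), and
      Taylor's theorem gives u(z) = a z^(k+1) + o(|z|^(k+1)).
   Only the value J(p0) = J0 and the continuity of J are used: neither J^2 = -1 nor the
   bound on the image of u plays a role. *)

Lemma mvt_segment (f f' : R -> R) (a b : R) :
  (forall c, Rabs (c - a) <= Rabs (b - a) -> derivable_pt_lim f c (f' c)) ->
  exists c, Rabs (c - a) <= Rabs (b - a) /\ f b - f a = f' c * (b - a).
Proof.
  intros H.
  destruct (Rtotal_order a b) as [Hab|[Hab|Hab]].
  - destruct (MVT_cor2 f f' a b Hab) as [c [Hc1 Hc2]].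
    + intros c Hc. apply H. rewrite !Rabs_right by lra. lra.
    + exists c. split; [rewrite !Rabs_right by lra; lra | exact Hc1].
  - subst. exists b. split; [right; reflexivity | ring].
  - destruct (MVT_cor2 f f' b a Hab) as [c [Hc1 Hc2]].
    + intros c Hc. apply H. rewrite !Rabs_left1 by lra. lra.
    + exists c. split; [rewrite !Rabs_left1 by lra; lra | ].
      replace (f b - f a) with (-(f a - f b)) by ring. rewrite Hc1; ring.
Qed.

Lemma derivable_pt_lim_local (f g : R -> R) x l d : 0 < d ->
  (forall y, Rabs (y - x) < d -> f y = g y) ->
  derivable_pt_lim f x l -> derivable_pt_lim g x l.
Proof.
  intros Hd Heq H eps Heps.
  destruct (H eps Heps) as [del Hdel].
  assert (Hm : 0 < Rmin del d) by (apply Rmin_pos; [apply cond_pos|lra]).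
  exists (mkposreal _ Hm). intros h Hh0 Hh. simpl in Hh.
  apply Rmin_Rgt in Hh as [Hhdel Hhd].
  rewrite <- (Heq (x+h)), <- (Heq x).
  - apply Hdel; auto.
  - rewrite Rminus_diag, Rabs_R0; lra.
  - replace (x + h - x) with h by ring. exact Hhd.
Qed.

Lemma Rabs_le_eps_zero (a C : R) : 0 <= C ->
  (forall eps, 0 < eps -> Rabs a <= eps * C) -> a = 0.
Proof.
  intros HC H. destruct (Req_dec a 0) as [|Hn]; auto.
  assert (Ha : 0 < Rabs a) by (apply Rabs_pos_lt; auto).
  specialize (H (Rabs a / (2 * (C + 1))) ltac:(apply Rdiv_lt_0_compat; lra)).
  assert (Rabs a / (2 * (C + 1)) * C < Rabs a).
  { apply (Rmult_lt_reg_r (2*(C+1))). lra.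
    replace (Rabs a / (2 * (C + 1)) * C * (2 * (C + 1))) with (Rabs a * C) by (field; lra).
    nra. }
  lra.
Qed.

Lemma Rabs_near_lt x c h r : Rabs x + h < r -> Rabs (c - x) <= h -> Rabs c < r.
Proof.
  intros. replace c with (x + (c - x)) by ring.
  pose proof (Rabs_triang x (c - x)). lra.
Qed.

(** * Families of partial derivatives in two variables *)

Definition cont2 (f : R -> R -> R) (s t : R) : Prop :=
  forall eps, 0 < eps -> exists d, 0 < d /\ forall s' t',
    Rabs (s' - s) < d -> Rabs (t' - t) < d -> Rabs (f s' t' - f s t) < eps.

Definition partials2 (r : R) (G : list nat -> R -> R -> R) : Prop :=
  forall l s t, Rabs s < r -> Rabs t < r ->
    derivable_pt_lim (fun y => G l y t) s (G (0%nat :: l) s t) /\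
    derivable_pt_lim (fun y => G l s y) t (G (1%nat :: l) s t) /\
    cont2 (G l) s t.

(* The partial derivatives of d/ds G (j = 0) or of d/dt G (j = 1). *)
Definition shift (j : nat) (G : list nat -> R -> R -> R) : list nat -> R -> R -> R :=
  fun l => G (l ++ [j]).

Lemma partials2_shift r G j : partials2 r G -> partials2 r (shift j G).
Proof. intros HG l s t Hs Ht. exact (HG (l ++ [j]) s t Hs Ht). Qed.

Lemma partials2_comb r A B c : partials2 r A -> partials2 r B ->
  partials2 r (fun l s t => A l s t + c * B l s t).
Proof.
  intros HA HB l s t Hs Ht.
  destruct (HA l s t Hs Ht) as [A0 [A1 Ac]].
  destruct (HB l s t Hs Ht) as [B0 [B1 Bc]].
  split; [|split].
  - apply (derivable_pt_lim_plus (fun y => A l y t) (fun y => c * B l y t)); auto.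
    apply (derivable_pt_lim_scal (fun y => B l y t)); auto.
  - apply (derivable_pt_lim_plus (fun y => A l s y) (fun y => c * B l s y)); auto.
    apply (derivable_pt_lim_scal (fun y => B l s y)); auto.
  - intros eps Heps.
    assert (Hc : 0 < Rabs c + 1) by (pose proof (Rabs_pos c); lra).
    destruct (Ac (eps/2) ltac:(lra)) as [d1 [Hd1 E1]].
    destruct (Bc (eps/2/(Rabs c + 1))) as [d2 [Hd2 E2]].
    { apply Rdiv_lt_0_compat; lra. }
    exists (Rmin d1 d2). split; [apply Rmin_pos; auto|]. intros s' t' H1 H2.
    apply Rmin_Rgt in H1 as [H1a H1b]; apply Rmin_Rgt in H2 as [H2a H2b].
    specialize (E1 s' t' H1a H2a). specialize (E2 s' t' H1b H2b).
    replace (A l s' t' + c * B l s' t' - (A l s t + c * B l s t)) with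
      ((A l s' t' - A l s t) + c * (B l s' t' - B l s t)) by ring.
    eapply Rle_lt_trans; [apply Rabs_triang|]. rewrite Rabs_mult.
    assert (Rabs c * Rabs (B l s' t' - B l s t) <= (Rabs c + 1) * (eps / 2 / (Rabs c + 1)))
      by (apply Rmult_le_compat; try apply Rabs_pos; lra).
    replace ((Rabs c + 1) * (eps / 2 / (Rabs c + 1))) with (eps/2) in H by (field; lra).
    lra.
Qed.

Definition good (l : list nat) := Forall (fun q => (q < 2)%nat) l.

Lemma good_app l j : good l -> (j < 2)%nat -> good (l ++ [j]).
Proof. intros H Hj. apply Forall_app; split; auto. Qed.

Lemma count_t_0 l : count_t (0%nat :: l) = count_t l.
Proof. unfold count_t. apply count_occ_cons_neq. lia. Qed.

Lemma count_t_1 l : count_t (1%nat :: l) = S (count_t l).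
Proof. unfold count_t. apply count_occ_cons_eq. reflexivity. Qed.

Lemma count_app0 m : count_t (m ++ [0%nat]) = count_t m.
Proof. unfold count_t. rewrite count_occ_app. simpl. destruct (Nat.eq_dec 0 1); lia. Qed.

Lemma count_app1 m : count_t (m ++ [1%nat]) = S (count_t m).
Proof. unfold count_t. rewrite count_occ_app. simpl. destruct (Nat.eq_dec 1 1); lia. Qed.

Lemma count_le l : good l -> (count_t l <= length l)%nat.
Proof.
  induction l as [|c l IH]; intros Hg; [unfold count_t; simpl; lia|].
  inversion Hg; subst. specialize (IH H2). destruct c as [|[|c]]; try lia.
  - rewrite count_t_0; simpl; lia.
  - rewrite count_t_1; simpl; lia.
Qed.

Definition canon (N q : nat) : list nat := repeat 0%nat (N - q) ++ repeat 1%nat q.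

Lemma canon_length N q : (q <= N)%nat -> length (canon N q) = N.
Proof. intros; unfold canon; rewrite length_app, !repeat_length; lia. Qed.

Lemma canon_count N q : count_t (canon N q) = q.
Proof.
  unfold canon. induction (N - q)%nat as [|a IH]; simpl.
  - induction q; simpl; [reflexivity|]. rewrite count_t_1, IHq; reflexivity.
  - rewrite count_t_0; auto.
Qed.

Lemma canon_good N q : good (canon N q).
Proof.
  unfold canon, good. apply Forall_app; split; apply Forall_forall;
    intros z Hz; apply repeat_spec in Hz; lia.
Qed.

Fixpoint mono (l : list nat) (s t : R) : R :=
  match l with nil => 1 | q :: l' => (if Nat.eqb q 0 then s else t) * mono l' s t end.

Lemma mono_app l j s t : mono (l ++ [j]) s t = mono l s t * (if Nat.eqb j 0 then s else t).
Proof. induction l; simpl; [ring|]. rewrite IHl; ring. Qed.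

Lemma mono_scale l a s t : mono l (a*s) (a*t) = a ^ length l * mono l s t.
Proof. induction l; simpl; [ring|]. rewrite IHl. destruct (Nat.eqb a0 0); ring. Qed.

Lemma mono_bound l s t : Rabs (mono l s t) <= (Rabs s + Rabs t) ^ length l.
Proof.
  induction l; simpl; [rewrite Rabs_R1; lra|].
  rewrite Rabs_mult. apply Rmult_le_compat; try apply Rabs_pos; auto.
  pose proof (Rabs_pos s); pose proof (Rabs_pos t). destruct (Nat.eqb a 0); lra.
Qed.

Lemma mono_1 l t : good l -> mono l 1 t = t ^ count_t l.
Proof.
  induction l as [|c l IH]; intros Hg; [reflexivity|].
  inversion Hg; subst. destruct c as [|[|c]]; try lia.
  - rewrite count_t_0. simpl. rewrite IH; auto; ring.
  - rewrite count_t_1. simpl. rewrite IH; auto.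
Qed.

(* Sum of g over all 2^N lists of N directions (built by appending directions). *)
Fixpoint lsum (N : nat) (g : list nat -> R) : R :=
  match N with
  | O => g nil
  | S N' => lsum N' (fun m => g (m ++ [0%nat])) + lsum N' (fun m => g (m ++ [1%nat]))
  end.

Lemma lsum_ext_good N : forall g h,
  (forall l, length l = N -> good l -> g l = h l) -> lsum N g = lsum N h.
Proof.
  induction N; simpl; intros g h H.
  - apply H; [reflexivity| constructor].
  - f_equal; apply IHN; intros l Hl Hg; (apply H;
      [rewrite length_app; simpl; lia | apply good_app; auto]).
Qed.

Lemma lsum_ext N g h : (forall l, g l = h l) -> lsum N g = lsum N h.
Proof. intros; apply lsum_ext_good; auto. Qed.

Lemma lsum_plus N : forall g h, lsum N (fun l => g l + h l) = lsum N g + lsum N h.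
Proof. induction N; simpl; intros; auto. rewrite !IHN; ring. Qed.

Lemma lsum_scal N : forall c g, lsum N (fun l => c * g l) = c * lsum N g.
Proof. induction N; simpl; intros; auto. rewrite !IHN; ring. Qed.

Lemma lsum_scal_r N c g : lsum N (fun l => g l * c) = lsum N g * c.
Proof. rewrite Rmult_comm, <- lsum_scal. apply lsum_ext; intros; ring. Qed.

Lemma lsum_abs N : forall g, Rabs (lsum N g) <= lsum N (fun l => Rabs (g l)).
Proof.
  induction N; simpl; intros; [lra|].
  eapply Rle_trans; [apply Rabs_triang|]. apply Rplus_le_compat; apply IHN.
Qed.

Lemma lsum_le N : forall g h, (forall l, length l = N -> good l -> g l <= h l) ->
  lsum N g <= lsum N h.
Proof.
  induction N; simpl; intros g h H.
  - apply H; [reflexivity| constructor].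
  - apply Rplus_le_compat; apply IHN; intros l Hl Hg; (apply H;
      [rewrite length_app; simpl; lia | apply good_app; auto]).
Qed.

Section Family.

Variables (r : R) (G : list nat -> R -> R -> R).
Hypothesis HG : partials2 r G.

Lemma first_order_taylor l x y eps : Rabs x < r -> Rabs y < r -> 0 < eps ->
  exists d, 0 < d /\ forall h k, Rabs h < d -> Rabs k < d ->
   Rabs (G l (x+h) (y+k) - G l x y - G (0%nat::l) x y * h - G (1%nat::l) x y * k)
     <= eps * (Rabs h + Rabs k).
Proof.
  intros Hx Hy He.
  destruct (proj2 (proj2 (HG (0%nat::l) x y Hx Hy)) eps He) as [d0 [Hd0 C0]].
  destruct (proj2 (proj2 (HG (1%nat::l) x y Hx Hy)) eps He) as [d1 [Hd1 C1]].
  set (m := r - Rmax (Rabs x) (Rabs y)).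
  assert (Hm : 0 < m) by (unfold m; apply Rmax_case; lra).
  assert (Mx : Rabs x + m <= r) by (unfold m; pose proof (Rmax_l (Rabs x) (Rabs y)); lra).
  assert (My : Rabs y + m <= r) by (unfold m; pose proof (Rmax_r (Rabs x) (Rabs y)); lra).
  exists (Rmin m (Rmin d0 d1)). split; [repeat apply Rmin_pos; auto|].
  intros h k Hh Hk.
  apply Rmin_Rgt in Hh as [Hhm Hh]; apply Rmin_Rgt in Hh as [Hh0 _].
  apply Rmin_Rgt in Hk as [Hkm Hk]; apply Rmin_Rgt in Hk as [Hk0 Hk1].
  assert (Hyk : Rabs (y + k) < r)
    by (apply (Rabs_near_lt y _ (Rabs k)); [lra | replace (y + k - y) with k by ring; lra]).
  destruct (mvt_segment (fun a => G l a (y+k)) (fun a => G (0%nat::l) a (y+k)) x (x+h))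
    as [xi [Hxi Exi]].
  { intros c Hc. replace (x + h - x) with h in Hc by ring.
    apply (HG l c (y+k)); auto. apply (Rabs_near_lt x c (Rabs h)); lra. }
  destruct (mvt_segment (fun b => G l x b) (fun b => G (1%nat::l) x b) y (y+k))
    as [eta [Heta Eeta]].
  { intros c Hc. replace (y + k - y) with k in Hc by ring.
    apply (HG l x c); auto. apply (Rabs_near_lt y c (Rabs k)); lra. }
  simpl in Exi, Eeta.
  replace (x + h - x) with h in Exi, Hxi by ring.
  replace (y + k - y) with k in Eeta, Heta by ring.
  replace (G l (x + h) (y + k) - G l x y - G (0%nat :: l) x y * h - G (1%nat :: l) x y * k)
    with ((G (0%nat::l) xi (y+k) - G (0%nat::l) x y) * h
          + (G (1%nat::l) x eta - G (1%nat::l) x y) * k) by lra.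
  assert (A : Rabs (G (0%nat::l) xi (y+k) - G (0%nat::l) x y) < eps).
  { apply C0; [lra|]. replace (y + k - y) with k by ring. auto. }
  assert (B : Rabs (G (1%nat::l) x eta - G (1%nat::l) x y) < eps).
  { apply C1; [rewrite Rminus_diag, Rabs_R0; auto | lra]. }
  eapply Rle_trans; [apply Rabs_triang|]. rewrite !Rabs_mult, Rmult_plus_distr_l.
  apply Rplus_le_compat; apply Rmult_le_compat_r; try apply Rabs_pos; lra.
Qed.

Lemma ray_derivative l s t tau0 : Rabs (tau0*s) < r -> Rabs (tau0*t) < r ->
  derivable_pt_lim (fun tau => G l (tau*s) (tau*t)) tau0
    (G (0%nat::l) (tau0*s) (tau0*t) * s + G (1%nat::l) (tau0*s) (tau0*t) * t).
Proof.
  intros Hs Ht eps Heps.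
  set (K := Rabs s + Rabs t + 1).
  pose proof (Rabs_pos s); pose proof (Rabs_pos t).
  assert (HK : 0 < K) by (unfold K; lra).
  destruct (first_order_taylor l (tau0*s) (tau0*t) (eps/(2*K)) Hs Ht) as [d [Hd Hd']].
  { apply Rdiv_lt_0_compat; lra. }
  assert (Hdk : 0 < d / K) by (apply Rdiv_lt_0_compat; lra).
  exists (mkposreal _ Hdk). intros h Hh0 Hh. simpl in Hh.
  assert (HhK : Rabs h * K < d).
  { apply (Rmult_lt_compat_r K) in Hh; auto. unfold Rdiv in Hh.
    rewrite Rmult_assoc, Rinv_l, Rmult_1_r in Hh; lra. }
  assert (Hah : 0 < Rabs h) by (apply Rabs_pos_lt; auto).
  assert (Hhs : Rabs (h*s) < d) by (rewrite Rabs_mult; unfold K in HhK; nra).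
  assert (Hht : Rabs (h*t) < d) by (rewrite Rabs_mult; unfold K in HhK; nra).
  pose proof (Hd' (h*s) (h*t) Hhs Hht) as E.
  replace ((tau0 + h) * s) with (tau0*s + h*s) by ring.
  replace ((tau0 + h) * t) with (tau0*t + h*t) by ring.
  set (A := G l (tau0 * s + h * s) (tau0 * t + h * t)) in *.
  set (B := G l (tau0 * s) (tau0 * t)) in *.
  set (P := G (0%nat :: l) (tau0 * s) (tau0 * t)) in *.
  set (Q := G (1%nat :: l) (tau0 * s) (tau0 * t)) in *.
  replace ((A - B) / h - (P * s + Q * t)) with ((A - B - P * (h * s) - Q * (h * t)) / h)
    by (field; auto).
  unfold Rdiv. rewrite Rabs_mult, Rabs_inv.
  apply Rle_lt_trans with (eps / (2 * K) * (Rabs (h * s) + Rabs (h * t)) * / Rabs h).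
  { apply Rmult_le_compat_r; auto. left; apply Rinv_0_lt_compat; auto. }
  rewrite !Rabs_mult.
  replace (eps / (2 * K) * (Rabs h * Rabs s + Rabs h * Rabs t) * / Rabs h)
    with (eps * ((Rabs s + Rabs t) / (2*K))) by (field; lra).
  assert ((Rabs s + Rabs t) / (2*K) < 1).
  { apply (Rmult_lt_reg_r (2*K)); [lra|]. unfold Rdiv.
    rewrite Rmult_assoc, Rinv_l by lra. unfold K; lra. }
  assert (0 <= (Rabs s + Rabs t) / (2*K))
    by (apply Rmult_le_pos; [lra | left; apply Rinv_0_lt_compat; lra]).
  nra.
Qed.

Definition second_diff l x y h : R :=
  G l (x+h) (y+h) - G l (x+h) y - (G l x (y+h) - G l x y).

Lemma second_diff_st l x y h : 0 < h -> Rabs x + h < r -> Rabs y + h < r ->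
  exists xi eta, Rabs (xi - x) <= h /\ Rabs (eta - y) <= h /\
    second_diff l x y h = G (1%nat::0%nat::l) xi eta * (h * h).
Proof.
  intros Hh Bx By.
  assert (Ex : Rabs (x + h - x) = h) by (replace (x+h-x) with h by ring; apply Rabs_right; lra).
  assert (Ey : Rabs (y + h - y) = h) by (replace (y+h-y) with h by ring; apply Rabs_right; lra).
  assert (Hy : Rabs y < r) by (pose proof (Rabs_pos y); lra).
  assert (Hyh : Rabs (y + h) < r) by (apply (Rabs_near_lt y _ h); lra).
  destruct (mvt_segment (fun a => G l a (y+h) - G l a y)
     (fun a => G (0%nat::l) a (y+h) - G (0%nat::l) a y) x (x+h)) as [xi [Hxi Exi]].
  { intros c Hc. rewrite Ex in Hc. assert (Rabs c < r) by (apply (Rabs_near_lt x c h); lra).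
    apply (derivable_pt_lim_minus (fun a => G l a (y+h)) (fun a => G l a y));
      [apply (HG l c (y+h)) | apply (HG l c y)]; auto. }
  rewrite Ex in Hxi.
  assert (Hxi' : Rabs xi < r) by (apply (Rabs_near_lt x xi h); lra).
  destruct (mvt_segment (fun b => G (0%nat::l) xi b) (fun b => G (1%nat::0%nat::l) xi b) y (y+h))
    as [eta [Heta Eeta]].
  { intros c Hc. rewrite Ey in Hc. apply (HG (0%nat::l) xi c); auto.
    apply (Rabs_near_lt y c h); lra. }
  rewrite Ey in Heta. exists xi, eta. split; [|split]; auto.
  cbv beta in Exi, Eeta. unfold second_diff.
  replace (x + h - x) with h in Exi by ring. replace (y + h - y) with h in Eeta by ring.
  replace (G l (x + h) (y + h) - G l (x + h) y - (G l x (y + h) - G l x y))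
    with ((G (0%nat :: l) xi (y + h) - G (0%nat :: l) xi y) * h) by (rewrite <- Exi; ring).
  rewrite Eeta. ring.
Qed.

Lemma second_diff_ts l x y h : 0 < h -> Rabs x + h < r -> Rabs y + h < r ->
  exists xi eta, Rabs (xi - x) <= h /\ Rabs (eta - y) <= h /\
    second_diff l x y h = G (0%nat::1%nat::l) xi eta * (h * h).
Proof.
  intros Hh Bx By.
  assert (Ex : Rabs (x + h - x) = h) by (replace (x+h-x) with h by ring; apply Rabs_right; lra).
  assert (Ey : Rabs (y + h - y) = h) by (replace (y+h-y) with h by ring; apply Rabs_right; lra).
  assert (Hx : Rabs x < r) by (pose proof (Rabs_pos x); lra).
  assert (Hxh : Rabs (x + h) < r) by (apply (Rabs_near_lt x _ h); lra).
  destruct (mvt_segment (fun b => G l (x+h) b - G l x b)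
     (fun b => G (1%nat::l) (x+h) b - G (1%nat::l) x b) y (y+h)) as [eta [Heta Eeta]].
  { intros c Hc. rewrite Ey in Hc. assert (Rabs c < r) by (apply (Rabs_near_lt y c h); lra).
    apply (derivable_pt_lim_minus (fun b => G l (x+h) b) (fun b => G l x b));
      [apply (HG l (x+h) c) | apply (HG l x c)]; auto. }
  rewrite Ey in Heta.
  assert (Heta' : Rabs eta < r) by (apply (Rabs_near_lt y eta h); lra).
  destruct (mvt_segment (fun a => G (1%nat::l) a eta) (fun a => G (0%nat::1%nat::l) a eta) x (x+h))
    as [xi [Hxi Exi]].
  { intros c Hc. rewrite Ex in Hc. apply (HG (1%nat::l) c eta); auto.
    apply (Rabs_near_lt x c h); lra. }
  rewrite Ex in Hxi. exists xi, eta. split; [|split]; auto.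
  cbv beta in Exi, Eeta. unfold second_diff.
  replace (x + h - x) with h in Exi by ring. replace (y + h - y) with h in Eeta by ring.
  replace (G l (x + h) (y + h) - G l (x + h) y - (G l x (y + h) - G l x y))
    with ((G (1%nat :: l) (x + h) eta - G (1%nat :: l) x eta) * h) by (rewrite <- Eeta; ring).
  rewrite Exi. ring.
Qed.

Lemma schwarz l x y : Rabs x < r -> Rabs y < r ->
  G (0%nat :: 1%nat :: l) x y = G (1%nat :: 0%nat :: l) x y.
Proof.
  intros Hx Hy. apply Rminus_diag_uniq, (Rabs_le_eps_zero _ 2); [lra|]. intros eps Heps.
  destruct (proj2 (proj2 (HG (1%nat::0%nat::l) x y Hx Hy)) eps Heps) as [da [Hda Ca]].
  destruct (proj2 (proj2 (HG (0%nat::1%nat::l) x y Hx Hy)) eps Heps) as [db [Hdb Cb]].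
  set (m := r - Rmax (Rabs x) (Rabs y)).
  assert (Hm : 0 < m) by (unfold m; apply Rmax_case; lra).
  set (h := Rmin m (Rmin da db) / 2).
  assert (Hmin : 0 < Rmin m (Rmin da db)) by (repeat apply Rmin_pos; auto).
  assert (Hh : 0 < h) by (unfold h; lra).
  assert (Hhm : h < m /\ h < da /\ h < db).
  { unfold h. pose proof (Rmin_l m (Rmin da db)); pose proof (Rmin_r m (Rmin da db)).
    pose proof (Rmin_l da db); pose proof (Rmin_r da db). lra. }
  assert (Bx : Rabs x + h < r) by (unfold m in Hhm; pose proof (Rmax_l (Rabs x) (Rabs y)); lra).
  assert (By : Rabs y + h < r) by (unfold m in Hhm; pose proof (Rmax_r (Rabs x) (Rabs y)); lra).
  destruct (second_diff_st l x y h Hh Bx By) as [xi [eta [Hxi [Heta E1]]]].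
  destruct (second_diff_ts l x y h Hh Bx By) as [xi' [eta' [Hxi' [Heta' E2]]]].
  assert (Eq : G (1%nat::0%nat::l) xi eta = G (0%nat::1%nat::l) xi' eta')
    by (apply (Rmult_eq_reg_r (h*h)); [congruence | nra]).
  assert (A1 : Rabs (G (1%nat::0%nat::l) xi eta - G (1%nat::0%nat::l) x y) < eps)
    by (apply Ca; lra).
  assert (A2 : Rabs (G (0%nat::1%nat::l) xi' eta' - G (0%nat::1%nat::l) x y) < eps)
    by (apply Cb; lra).
  rewrite Eq in A1.
  replace (G (0%nat :: 1%nat :: l) x y - G (1%nat :: 0%nat :: l) x y) with
    ((G (0%nat :: 1%nat :: l) xi' eta' - G (1%nat :: 0%nat :: l) x y)
     - (G (0%nat :: 1%nat :: l) xi' eta' - G (0%nat :: 1%nat :: l) x y)) by ring.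
  eapply Rle_trans; [apply Rabs_triang|]. rewrite Rabs_Ropp. lra.
Qed.

Definition agree (l1 l2 : list nat) : Prop :=
  forall x y, Rabs x < r -> Rabs y < r -> G l1 x y = G l2 x y.

Lemma agree_sym l1 l2 : agree l1 l2 -> agree l2 l1.
Proof. intros H x y Hx Hy; symmetry; auto. Qed.

Lemma agree_trans l1 l2 l3 : agree l1 l2 -> agree l2 l3 -> agree l1 l3.
Proof. intros H1 H2 x y Hx Hy; rewrite H1; auto. Qed.

Lemma agree_cons l1 l2 c : agree l1 l2 -> (c < 2)%nat -> agree (c :: l1) (c :: l2).
Proof.
  intros HE Hc x y Hx Hy.
  destruct (HG l1 x y Hx Hy) as [D10 [D11 _]].
  destruct (HG l2 x y Hx Hy) as [D20 [D21 _]].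
  destruct c as [|[|c]]; [| |lia].
  - apply (uniqueness_limite (fun a => G l2 a y) x); auto.
    apply (derivable_pt_lim_local (fun a => G l1 a y) _ x _ (r - Rabs x)); [lra| |auto].
    intros a Ha. apply HE; auto. apply (Rabs_near_lt x a (Rabs (a - x))); lra.
  - apply (uniqueness_limite (fun a => G l2 x a) y); auto.
    apply (derivable_pt_lim_local (fun a => G l1 x a) _ y _ (r - Rabs y)); [lra| |auto].
    intros a Ha. apply HE; auto. apply (Rabs_near_lt y a (Rabs (a - y))); lra.
Qed.

Lemma agree_bubble a l :
  agree (1%nat :: repeat 0%nat a ++ l) (repeat 0%nat a ++ 1%nat :: l).
Proof.
  induction a as [|a IH]; [intros x y _ _; reflexivity|].
  simpl. eapply agree_trans.
  - intros x y Hx Hy. symmetry. apply schwarz; auto.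
  - apply agree_cons; auto.
Qed.

Lemma agree_canon l : good l -> agree l (canon (length l) (count_t l)).
Proof.
  induction l as [|c l IH]; intros Hg; [intros x y _ _; reflexivity|].
  inversion Hg; subst. pose proof (count_le l H2) as Hle.
  eapply agree_trans; [apply agree_cons; [apply IH; auto|auto]|].
  destruct c as [|[|c]]; try lia; unfold canon; simpl length.
  - rewrite count_t_0.
    replace (S (length l) - count_t l)%nat with (S (length l - count_t l)) by lia.
    intros x y _ _; reflexivity.
  - rewrite count_t_1.
    replace (S (length l) - S (count_t l))%nat with (length l - count_t l)%nat by lia.
    apply agree_bubble.
Qed.

Lemma agree_count l1 l2 : good l1 -> good l2 -> length l1 = length l2 ->
  count_t l1 = count_t l2 -> agree l1 l2.
Proof.
  intros H1 H2 HL HC. eapply agree_trans; [apply agree_canon; eauto|].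
  rewrite HL, HC. apply agree_sym, agree_canon; auto.
Qed.

End Family.

(** * Taylor expansion at the origin *)

Definition small (N : nat) (f : R -> R -> R) : Prop :=
  forall eps, 0 < eps -> exists d, 0 < d /\ forall s t, Rabs s < d -> Rabs t < d ->
    Rabs (f s t) <= eps * (Rabs s + Rabs t) ^ N.

Definition big (N : nat) (f : R -> R -> R) : Prop :=
  exists C d, 0 < d /\ forall s t, Rabs s < d -> Rabs t < d ->
    Rabs (f s t) <= C * (Rabs s + Rabs t) ^ N.

Lemma small_ext r N f g : 0 < r ->
  (forall s t, Rabs s < r -> Rabs t < r -> f s t = g s t) -> small N f -> small N g.
Proof.
  intros Hr He Hf eps Heps. destruct (Hf eps Heps) as [d [Hd E]].
  exists (Rmin d r). split; [apply Rmin_pos; auto|]. intros s t Hs Ht.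
  apply Rmin_Rgt in Hs as [Hs Hsr]; apply Rmin_Rgt in Ht as [Ht Htr].
  rewrite <- He; auto.
Qed.

Lemma small_rsum N M F : (forall l, (l < M)%nat -> small N (F l)) ->
  small N (fun s t => rsum M (fun l => F l s t)).
Proof.
  induction M; intros H eps Heps.
  - exists 1. split; [lra|]. intros s t _ _. simpl. rewrite Rabs_R0.
    apply Rmult_le_pos; [lra| apply pow_le].
    pose proof (Rabs_pos s); pose proof (Rabs_pos t); lra.
  - destruct (IHM (fun l Hl => H l ltac:(lia)) (eps/2) ltac:(lra)) as [d1 [Hd1 E1]].
    destruct (H M ltac:(lia) (eps/2) ltac:(lra)) as [d2 [Hd2 E2]].
    exists (Rmin d1 d2). split; [apply Rmin_pos; auto|]. intros s t Hs Ht. simpl.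
    apply Rmin_Rgt in Hs as [Hs1 Hs2]; apply Rmin_Rgt in Ht as [Ht1 Ht2].
    specialize (E1 s t Hs1 Ht1). specialize (E2 s t Hs2 Ht2).
    eapply Rle_trans; [apply Rabs_triang|]. lra.
Qed.

Lemma small_mul N e g : small 0 e -> big N g -> small N (fun s t => e s t * g s t).
Proof.
  intros He [C [d1 [Hd1 Hg]]] eps Heps.
  assert (HC : 0 < Rabs C + 1) by (pose proof (Rabs_pos C); lra).
  destruct (He (eps / (Rabs C + 1)) ltac:(apply Rdiv_lt_0_compat; lra)) as [d2 [Hd2 E]].
  exists (Rmin d1 d2). split; [apply Rmin_pos; auto|]. intros s t Hs Ht.
  apply Rmin_Rgt in Hs as [Hs1 Hs2]; apply Rmin_Rgt in Ht as [Ht1 Ht2].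
  specialize (Hg s t Hs1 Ht1). specialize (E s t Hs2 Ht2).
  simpl in E. rewrite Rmult_1_r in E. rewrite Rabs_mult.
  set (P := (Rabs s + Rabs t) ^ N) in *.
  assert (HP : 0 <= P)
    by (unfold P; apply pow_le; pose proof (Rabs_pos s); pose proof (Rabs_pos t); lra).
  assert (Rabs (g s t) <= (Rabs C + 1) * P) by (pose proof (Rle_abs C); nra).
  apply Rle_trans with (eps / (Rabs C + 1) * ((Rabs C + 1) * P)).
  - apply Rmult_le_compat; auto; apply Rabs_pos.
  - right. field. lra.
Qed.

Lemma small_euclid N f : small N f -> forall eps, 0 < eps -> exists d, 0 < d /\
  forall s t, sqrt (s * s + t * t) < d -> Rabs (f s t) <= eps * sqrt (s * s + t * t) ^ N.
Proof.
  intros Hf eps Heps.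
  assert (H2 : 0 < 2 ^ N) by (apply pow_lt; lra).
  destruct (Hf (eps / 2 ^ N) ltac:(apply Rdiv_lt_0_compat; auto)) as [d [Hd Ed]].
  exists d. split; auto. intros s t Hst.
  set (rh := sqrt (s * s + t * t)) in *.
  assert (Hsr : Rabs s <= rh)
    by (unfold rh; rewrite <- sqrt_Rsqr_abs; apply sqrt_le_1_alt; unfold Rsqr; nra).
  assert (Htr : Rabs t <= rh)
    by (unfold rh; rewrite <- sqrt_Rsqr_abs; apply sqrt_le_1_alt; unfold Rsqr; nra).
  eapply Rle_trans; [apply Ed; lra|].
  apply Rle_trans with (eps / 2 ^ N * (2 * rh) ^ N).
  - apply Rmult_le_compat_l; [left; apply Rdiv_lt_0_compat; auto|]. apply pow_incr.
    pose proof (Rabs_pos s); pose proof (Rabs_pos t). lra.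
  - rewrite Rpow_mult_distr. right. field. lra.
Qed.

Definition taylor (N : nat) (G : list nat -> R -> R -> R) (s t : R) : R :=
  lsum N (fun l => G l 0 0 * mono l s t) / INR (fact N).

Lemma taylor_hom N G a s t : taylor N G (a*s) (a*t) = a ^ N * taylor N G s t.
Proof.
  unfold taylor, Rdiv. rewrite <- Rmult_assoc, <- lsum_scal. f_equal.
  apply lsum_ext_good. intros l Hl _. rewrite mono_scale, Hl. ring.
Qed.

Lemma taylor_succ N G s t :
  INR (S N) * taylor (S N) G s t = taylor N (shift 0 G) s t * s + taylor N (shift 1 G) s t * t.
Proof.
  assert (Hfact : INR (fact (S N)) = INR (S N) * INR (fact N))
    by (change (fact (S N)) with (S N * fact N)%nat; apply mult_INR).
  assert (HfN : 0 < INR (fact N)) by (apply lt_0_INR, lt_O_fact).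
  assert (HSN : 0 < INR (S N)) by (apply lt_0_INR; lia).
  unfold taylor, shift. rewrite Hfact. simpl lsum.
  rewrite (lsum_ext N (fun m => G (m ++ [0%nat]) 0 0 * mono (m ++ [0%nat]) s t)
             (fun m => G (m ++ [0%nat]) 0 0 * mono m s t * s))
    by (intro m; rewrite mono_app; simpl; ring).
  rewrite (lsum_ext N (fun m => G (m ++ [1%nat]) 0 0 * mono (m ++ [1%nat]) s t)
             (fun m => G (m ++ [1%nat]) 0 0 * mono m s t * t))
    by (intro m; rewrite mono_app; simpl; ring).
  rewrite !lsum_scal_r. field. lra.
Qed.

Lemma taylor_remainder_step r G N s t : partials2 r G -> G nil 0 0 = 0 ->
  Rabs s < r -> Rabs t < r ->
  exists th, Rabs th <= 1 /\
   G nil s t - taylor (S N) G s t =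
     (G [0%nat] (th*s) (th*t) - taylor N (shift 0 G) (th*s) (th*t)) * s
   + (G [1%nat] (th*s) (th*t) - taylor N (shift 1 G) (th*s) (th*t)) * t.
Proof.
  intros HG H0 Hs Ht.
  set (c := taylor (S N) G s t).
  assert (Hray : forall th, Rabs th <= 1 -> Rabs (th*s) < r /\ Rabs (th*t) < r).
  { intros th Hth. rewrite !Rabs_mult. pose proof (Rabs_pos s); pose proof (Rabs_pos t).
    pose proof (Rabs_pos th). split; nra. }
  destruct (mvt_segment (fun tau => G nil (tau*s) (tau*t) - c * tau ^ (S N))
    (fun tau => G [0%nat] (tau*s) (tau*t) * s + G [1%nat] (tau*s) (tau*t) * t
               - c * (INR (S N) * tau ^ N)) 0 1) as [th [Hth Eth]].
  { intros tau Htau. rewrite !Rminus_0_r, Rabs_R1 in Htau.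
    destruct (Hray tau Htau) as [B1 B2].
    apply (derivable_pt_lim_minus (fun tau => G nil (tau*s) (tau*t)) (fun tau => c * tau ^ (S N))).
    - apply (ray_derivative r G HG nil s t tau B1 B2).
    - apply (derivable_pt_lim_scal (fun tau => tau ^ (S N))).
      exact (derivable_pt_lim_pow tau (S N)). }
  rewrite !Rminus_0_r, Rabs_R1 in Hth. exists th. split; auto.
  cbv beta in Eth. rewrite !Rmult_1_l, !Rmult_0_l, pow1, pow_i, H0 in Eth by lia.
  assert (Hc : c * (INR (S N) * th ^ N)
     = taylor N (shift 0 G) (th*s) (th*t) * s + taylor N (shift 1 G) (th*s) (th*t) * t).
  { rewrite !taylor_hom.
    replace (c * (INR (S N) * th ^ N)) with (th ^ N * (INR (S N) * c)) by ring.
    unfold c. rewrite taylor_succ. ring. }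
  fold c. rewrite Hc in Eth. lra.
Qed.

Lemma taylor_expansion N : forall r G, 0 < r -> partials2 r G ->
  (forall l, (length l < N)%nat -> good l -> G l 0 0 = 0) ->
  small N (fun s t => G nil s t - taylor N G s t).
Proof.
  induction N as [|N IH]; intros r G Hr HG HZ eps Heps.
  - assert (H0 : Rabs 0 < r) by (rewrite Rabs_R0; auto).
    destruct (proj2 (proj2 (HG nil 0 0 H0 H0)) eps Heps) as [d [Hd Hc]].
    exists d. split; auto. intros s t Hs Ht. unfold taylor. simpl.
    replace (G [] 0 0 * 1 / 1) with (G [] 0 0) by field. rewrite Rmult_1_r.
    left. apply Hc; rewrite Rminus_0_r; auto.
  - assert (HZj : forall j, (j < 2)%nat ->
      forall l, (length l < N)%nat -> good l -> shift j G l 0 0 = 0).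
    { intros j Hj l Hl Hg. apply HZ; [rewrite length_app; simpl; lia | apply good_app; auto]. }
    destruct (IH r (shift 0 G) Hr (partials2_shift r G 0 HG) (HZj 0%nat ltac:(lia)) eps Heps)
      as [d0 [Hd0 E0]].
    destruct (IH r (shift 1 G) Hr (partials2_shift r G 1 HG) (HZj 1%nat ltac:(lia)) eps Heps)
      as [d1 [Hd1 E1]].
    exists (Rmin r (Rmin d0 d1)). split; [repeat apply Rmin_pos; auto|].
    intros s t Hs Ht.
    apply Rmin_Rgt in Hs as [Hsr Hs]; apply Rmin_Rgt in Hs as [Hs0 Hs1].
    apply Rmin_Rgt in Ht as [Htr Ht]; apply Rmin_Rgt in Ht as [Ht0 Ht1].
    destruct (taylor_remainder_step r G N s t HG) as [th [Hth ->]]; auto.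
    { apply HZ; [simpl; lia | constructor]. }
    assert (Hsc : forall x d, Rabs x < d -> Rabs (th*x) < d /\ Rabs (th*x) <= Rabs x).
    { intros x d Hx. rewrite Rabs_mult. pose proof (Rabs_pos x); pose proof (Rabs_pos th).
      split; nra. }
    destruct (Hsc s d0 Hs0) as [Hs0' Hs']; destruct (Hsc t d0 Ht0) as [Ht0' Ht'].
    specialize (E0 _ _ Hs0' Ht0').
    specialize (E1 _ _ (proj1 (Hsc s d1 Hs1)) (proj1 (Hsc t d1 Ht1))).
    change (shift 0 G []) with (G [0%nat]) in E0.
    change (shift 1 G []) with (G [1%nat]) in E1.
    pose proof (Rabs_pos s); pose proof (Rabs_pos t).
    assert (HnN : (Rabs (th * s) + Rabs (th * t)) ^ N <= (Rabs s + Rabs t) ^ N)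
      by (apply pow_incr; split;
          [pose proof (Rabs_pos (th*s)); pose proof (Rabs_pos (th*t)) |]; lra).
    eapply Rle_trans; [apply Rabs_triang|]. rewrite !Rabs_mult. simpl pow.
    set (e0 := Rabs (G [0%nat] (th * s) (th * t) - taylor N (shift 0 G) (th * s) (th * t))) in *.
    set (e1 := Rabs (G [1%nat] (th * s) (th * t) - taylor N (shift 1 G) (th * s) (th * t))) in *.
    assert (e0 <= eps * (Rabs s + Rabs t) ^ N)
      by (eapply Rle_trans; [exact E0|]; apply Rmult_le_compat_l; lra).
    assert (e1 <= eps * (Rabs s + Rabs t) ^ N)
      by (eapply Rle_trans; [exact E1|]; apply Rmult_le_compat_l; lra).
    pose proof (Rabs_pos (G [0%nat] (th * s) (th * t) - taylor N (shift 0 G) (th * s) (th * t))).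
    nra.
Qed.

Lemma taylor_big r G N : 0 < r -> partials2 r G ->
  (forall l, (length l < N)%nat -> good l -> G l 0 0 = 0) -> big N (G nil).
Proof.
  intros Hr HG HZ.
  destruct (taylor_expansion N r G Hr HG HZ 1 ltac:(lra)) as [d [Hd Ed]].
  set (F := INR (fact N)).
  assert (HF : 0 < F) by (apply lt_0_INR, lt_O_fact).
  set (C := lsum N (fun l => Rabs (G l 0 0))).
  exists (C / F + 1), d. split; auto.
  intros s t Hs Ht. specialize (Ed s t Hs Ht).
  set (S := (Rabs s + Rabs t) ^ N) in *.
  assert (HS : 0 <= S)
    by (unfold S; apply pow_le; pose proof (Rabs_pos s); pose proof (Rabs_pos t); lra).
  assert (HP : Rabs (taylor N G s t) <= C * S / F).
  { unfold taylor, Rdiv. rewrite Rabs_mult, (Rabs_right (/ INR (fact N)))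
      by (left; apply Rinv_0_lt_compat; auto).
    apply Rmult_le_compat_r; [left; apply Rinv_0_lt_compat; auto|].
    eapply Rle_trans; [apply lsum_abs|]. unfold C. rewrite <- lsum_scal_r.
    apply lsum_le. intros l Hl Hg. rewrite Rabs_mult.
    apply Rmult_le_compat_l; [apply Rabs_pos|]. unfold S; rewrite <- Hl; apply mono_bound. }
  replace (G nil s t) with ((G nil s t - taylor N G s t) + taylor N G s t) by ring.
  eapply Rle_trans; [apply Rabs_triang|].
  replace ((C / F + 1) * S) with (C * S / F + S) by (field; lra). lra.
Qed.

(** * Vanishing of the derivatives of a small function *)

Lemma small_minus N f g : small N f -> small N g -> small N (fun s t => f s t - g s t).
Proof.
  intros Hf Hg eps Heps.
  destruct (Hf (eps/2) ltac:(lra)) as [d1 [Hd1 E1]].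
  destruct (Hg (eps/2) ltac:(lra)) as [d2 [Hd2 E2]].
  exists (Rmin d1 d2). split; [apply Rmin_pos; auto|]. intros s t Hs Ht.
  apply Rmin_Rgt in Hs as [Hs1 Hs2]; apply Rmin_Rgt in Ht as [Ht1 Ht2].
  specialize (E1 s t Hs1 Ht1). specialize (E2 s t Hs2 Ht2).
  unfold Rminus at 1. eapply Rle_trans; [apply Rabs_triang|]. rewrite Rabs_Ropp. lra.
Qed.

Lemma homogeneous_small_zero N P :
  (forall a s t, 0 < a -> P (a*s) (a*t) = a ^ N * P s t) -> small N P ->
  forall s t, P s t = 0.
Proof.
  intros Hhom Hsmall s t. pose proof (Rabs_pos s); pose proof (Rabs_pos t).
  apply (Rabs_le_eps_zero _ ((Rabs s + Rabs t) ^ N)); [apply pow_le; lra|].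
  intros eps Heps. destruct (Hsmall eps Heps) as [d [Hd Ed]].
  set (lam := d / (2 * (Rabs s + Rabs t + 1))).
  assert (Hl : 0 < lam) by (unfold lam; apply Rdiv_lt_0_compat; lra).
  assert (E : lam * (Rabs s + Rabs t + 1) = d / 2) by (unfold lam; field; lra).
  assert (Hls : Rabs (lam * s) < d /\ Rabs (lam * t) < d)
    by (rewrite !Rabs_mult, (Rabs_right lam) by lra; split; nra).
  specialize (Ed (lam*s) (lam*t) (proj1 Hls) (proj2 Hls)).
  assert (Hlk : 0 < lam ^ N) by (apply pow_lt; auto).
  rewrite Hhom, !Rabs_mult, (Rabs_right (lam ^ N)), (Rabs_right lam),
    <- Rmult_plus_distr_l, Rpow_mult_distr in Ed by lra.
  apply (Rmult_le_reg_l (lam ^ N)); auto. lra.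
Qed.

Lemma rsum_shift M f : rsum (S M) f = f 0%nat + rsum M (fun q => f (S q)).
Proof. induction M; simpl in *; [ring|]. rewrite IHM. ring. Qed.

Lemma rsum_ext M f g : (forall q, (q < M)%nat -> f q = g q) -> rsum M f = rsum M g.
Proof. induction M; simpl; intros H; auto. rewrite IHM, H; auto. Qed.

Lemma rsum_plus M f g : rsum M (fun q => f q + g q) = rsum M f + rsum M g.
Proof. induction M; simpl; [ring|]. rewrite IHM; ring. Qed.

Lemma rsum_scal M c f : rsum M (fun q => c * f q) = c * rsum M f.
Proof. induction M; simpl; [ring|]. rewrite IHM; ring. Qed.

Lemma rsum_minus M f g : rsum M (fun q => f q - g q) = rsum M f - rsum M g.
Proof. induction M; simpl; [ring|]. rewrite IHM; ring. Qed.

Lemma rsum_abs M f : Rabs (rsum M f) <= rsum M (fun q => Rabs (f q)).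
Proof.
  induction M; simpl; [rewrite Rabs_R0; lra|].
  eapply Rle_trans; [apply Rabs_triang|]. lra.
Qed.

Lemma rsum_le M f g : (forall q, (q < M)%nat -> f q <= g q) -> rsum M f <= rsum M g.
Proof. induction M; simpl; intros H; [lra|]. apply Rplus_le_compat; auto. Qed.

Fixpoint bin (n k : nat) : R :=
  match n with
  | O => match k with O => 1 | S _ => 0 end
  | S n' => match k with O => 1 | S k' => bin n' k' + bin n' k end
  end.

Lemma bin_nonneg n : forall k, 0 <= bin n k.
Proof.
  induction n; intros [|k]; simpl; try lra.
  pose proof (IHn k); pose proof (IHn (S k)); lra.
Qed.

Lemma bin_pos n : forall k, (k <= n)%nat -> 0 < bin n k.
Proof.
  induction n; intros [|k] Hk; simpl; try lra; try lia.
  pose proof (IHn k ltac:(lia)); pose proof (bin_nonneg n (S k)); lra.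
Qed.

Lemma bin_over n : forall k, (n < k)%nat -> bin n k = 0.
Proof. induction n; intros [|k] Hk; simpl; try lra; try lia. rewrite !IHn by lia. ring. Qed.

Lemma lsum_count N : forall g,
  lsum N (fun l => g (count_t l)) = rsum (S N) (fun q => bin N q * g q).
Proof.
  induction N; intros g.
  - simpl. unfold count_t; simpl. ring.
  - simpl lsum.
    rewrite (lsum_ext N (fun m => g (count_t (m ++ [0%nat]))) (fun m => g (count_t m)))
      by (intro; rewrite count_app0; auto).
    rewrite (lsum_ext N (fun m => g (count_t (m ++ [1%nat]))) (fun m => g (S (count_t m))))
      by (intro; rewrite count_app1; auto).
    rewrite (IHN g), (IHN (fun q => g (S q))).
    rewrite (rsum_shift (S N) (fun q => bin (S N) q * g q)).
    rewrite (rsum_ext (S N) (fun q => bin (S N) (S q) * g (S q))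
       (fun q => bin N q * g (S q) + bin N (S q) * g (S q))) by (intros; simpl; ring).
    rewrite rsum_plus, (rsum_shift N (fun q => bin N q * g q)).
    replace (bin N 0 * g 0%nat) with (g 0%nat) by (destruct N; simpl; ring).
    assert (E : rsum (S N) (fun q => bin N (S q) * g (S q))
                = rsum N (fun q => bin N (S q) * g (S q)))
      by (simpl; rewrite bin_over by lia; ring).
    rewrite E. simpl bin. ring.
Qed.

Lemma poly_unique M : forall b : nat -> R,
  (forall t, 0 < t < 1 -> rsum M (fun q => b q * t ^ q) = 0) ->
  forall q, (q < M)%nat -> b q = 0.
Proof.
  induction M; intros b H q Hq; [lia|].
  assert (Hsplit : forall t, rsum (S M) (fun q => b q * t ^ q) =
                     b 0%nat + t * rsum M (fun q => b (S q) * t ^ q)).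
  { intro t. rewrite rsum_shift, <- rsum_scal. simpl. f_equal; [ring|].
    apply rsum_ext; intros; ring. }
  set (B := rsum M (fun q => Rabs (b (S q)))).
  assert (HB : 0 <= B).
  { apply Rle_trans with (rsum M (fun _ => 0)).
    - clear; induction M; simpl; lra.
    - apply rsum_le; intros; apply Rabs_pos. }
  assert (Hb0 : b 0%nat = 0).
  { apply (Rabs_le_eps_zero _ (B + 1)); [lra|]. intros eps Heps.
    set (t := Rmin (1/2) eps).
    assert (Ht : 0 < t < 1)
      by (unfold t; split; [apply Rmin_pos; lra| pose proof (Rmin_l (1/2) eps); lra]).
    assert (Hte : t <= eps) by apply Rmin_r.
    pose proof (H t Ht) as Ht0. rewrite Hsplit in Ht0.
    replace (b 0%nat) with (- (t * rsum M (fun q => b (S q) * t ^ q))) by lra.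
    rewrite Rabs_Ropp, Rabs_mult, (Rabs_right t) by lra.
    assert (Rabs (rsum M (fun q => b (S q) * t ^ q)) <= B).
    { eapply Rle_trans; [apply rsum_abs|]. apply rsum_le; intros p _.
      rewrite Rabs_mult, <- RPow_abs, (Rabs_right t) by lra.
      pose proof (Rabs_pos (b (S p))).
      assert (t ^ p <= 1) by (rewrite <- (pow1 p); apply pow_incr; lra).
      assert (0 <= t ^ p) by (apply pow_le; lra). nra. }
    pose proof (Rabs_pos (rsum M (fun q => b (S q) * t ^ q))). nra. }
  destruct q as [|q]; auto.
  apply (IHM (fun q => b (S q))); [|lia].
  intros t Ht. pose proof (H t Ht) as E. rewrite Hsplit, Hb0 in E.
  apply (Rmult_eq_reg_l t); lra.
Qed.

(* By symmetry of the derivatives, the Taylor term on the line s = 1 is a polynomial in t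
   whose q-th coefficient is bin N q times the derivative with q t-directions. *)
Lemma taylor_on_line r W N t : 0 < r -> partials2 r W ->
  INR (fact N) * taylor N W 1 t = rsum (S N) (fun q => (bin N q * W (canon N q) 0 0) * t ^ q).
Proof.
  intros Hr HW.
  assert (H0 : Rabs 0 < r) by (rewrite Rabs_R0; auto).
  assert (HfN : 0 < INR (fact N)) by (apply lt_0_INR, lt_O_fact).
  unfold taylor. replace (INR (fact N) * (lsum N (fun l => W l 0 0 * mono l 1 t) / INR (fact N)))
    with (lsum N (fun l => W l 0 0 * mono l 1 t)) by (field; lra).
  rewrite (lsum_ext_good N _ (fun l => (fun q => W (canon N q) 0 0 * t ^ q) (count_t l))).
  - rewrite (lsum_count N (fun q => W (canon N q) 0 0 * t ^ q)). apply rsum_ext; intros; ring.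
  - intros l Hl Hg. rewrite mono_1 by auto. f_equal.
    rewrite <- Hl. apply (agree_canon r W HW l Hg); auto.
Qed.

Lemma small_derivatives_vanish r W N : 0 < r -> partials2 r W ->
  (forall l, (length l < N)%nat -> good l -> W l 0 0 = 0) -> small N (W nil) ->
  forall l, length l = N -> good l -> W l 0 0 = 0.
Proof.
  intros Hr HW HZ Hsmall l Hl Hg.
  assert (H0 : Rabs 0 < r) by (rewrite Rabs_R0; auto).
  assert (Htaylor : forall s t, taylor N W s t = 0).
  { apply (homogeneous_small_zero N); [intros; apply taylor_hom|].
    apply (small_ext r N (fun s t => W nil s t - (W nil s t - taylor N W s t))); auto.
    2:{ apply (small_minus N _ _ Hsmall (taylor_expansion N r W Hr HW HZ)). }
    intros s t _ _. cbv beta. ring. }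
  assert (Hpoly : forall t, 0 < t < 1 ->
    rsum (S N) (fun q => (bin N q * W (canon N q) 0 0) * t ^ q) = 0).
  { intros t _. rewrite <- (taylor_on_line r W N t Hr HW), Htaylor. ring. }
  rewrite (agree_canon r W HW l Hg 0 0 H0 H0), Hl.
  pose proof (count_le l Hg) as Hc.
  pose proof (poly_unique (S N) _ Hpoly (count_t l) ltac:(lia)) as Hb.
  pose proof (bin_pos N (count_t l) ltac:(lia)).
  apply (Rmult_eq_reg_l (bin N (count_t l))); lra.
Qed.

Definition pt (s t : R) : nat -> R :=
  fun j => if Nat.eqb j 0 then s else if Nat.eqb j 1 then t else 0.

Lemma pt00 : pt 0 0 = zerov.
Proof.
  apply functional_extensionality; intro j; unfold pt, zerov.
  destruct (Nat.eqb j 0); destruct (Nat.eqb j 1); reflexivity.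
Qed.

Lemma setc_pt0 s t y : setc (pt s t) 0 y = pt y t.
Proof.
  apply functional_extensionality; intro j; unfold pt, setc.
  destruct (Nat.eqb j 0); reflexivity.
Qed.

Lemma setc_pt1 s t y : setc (pt s t) 1 y = pt s y.
Proof.
  apply functional_extensionality; intro j; unfold pt, setc.
  destruct (Nat.eqb j 0) eqn:E0; destruct (Nat.eqb j 1) eqn:E1; try reflexivity.
  apply Nat.eqb_eq in E0; apply Nat.eqb_eq in E1; lia.
Qed.

Lemma ball_pt r s t : Rabs s < r -> Rabs t < r -> ball 2 r (pt s t).
Proof. intros Hs Ht i Hi. unfold pt. destruct i as [|[|i]]; simpl; auto; lia. Qed.

Lemma partials2_of_is_partials r f D : is_partials 2 (ball 2 r) f D ->
  partials2 r (fun l s t => D l (pt s t)).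
Proof.
  intros [_ [H1 H2]] l s t Hs Ht.
  pose proof (ball_pt r s t Hs Ht) as Hb.
  split; [|split].
  - pose proof (H1 l (pt s t) 0%nat Hb ltac:(lia)) as D0.
    replace (fun y => D l (setc (pt s t) 0 y)) with (fun y => D l (pt y t)) in D0
      by (apply functional_extensionality; intro y; rewrite setc_pt0; reflexivity).
    exact D0.
  - pose proof (H1 l (pt s t) 1%nat Hb ltac:(lia)) as D1.
    replace (fun y => D l (setc (pt s t) 1 y)) with (fun y => D l (pt s y)) in D1
      by (apply functional_extensionality; intro y; rewrite setc_pt1; reflexivity).
    exact D1.
  - intros eps Heps. destruct (H2 l (pt s t) Hb eps Heps) as [d [Hd Hc]].
    exists d; split; auto. intros s' t' H's H't. apply Hc.
    intros i Hi. destruct i as [|[|i]]; simpl; auto; lia.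
Qed.

Lemma is_partials_unique r f D1 D2 :
  is_partials 2 (ball 2 r) f D1 -> is_partials 2 (ball 2 r) f D2 ->
  forall l, good l -> forall s t, Rabs s < r -> Rabs t < r -> D1 l (pt s t) = D2 l (pt s t).
Proof.
  intros H1 H2.
  pose proof (partials2_of_is_partials r f D1 H1) as S1.
  pose proof (partials2_of_is_partials r f D2 H2) as S2.
  induction l as [|c l IH]; intros Hg s t Hs Ht.
  - destruct H1 as [A _]; destruct H2 as [B _].
    rewrite A, B; auto; apply ball_pt; auto.
  - inversion Hg; subst.
    destruct (S1 l s t Hs Ht) as [D10 [D11 _]].
    destruct (S2 l s t Hs Ht) as [D20 [D21 _]].
    cbv beta in D10, D11, D20, D21.
    destruct c as [|[|c]]; [| |lia].
    + apply (uniqueness_limite (fun a => D2 l (pt a t)) s); auto.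
      apply (derivable_pt_lim_local (fun a => D1 l (pt a t)) _ s _ (r - Rabs s)); [lra| |auto].
      intros a Ha. apply IH; auto. apply (Rabs_near_lt s a (Rabs (a - s))); lra.
    + apply (uniqueness_limite (fun a => D2 l (pt s a)) t); auto.
      apply (derivable_pt_lim_local (fun a => D1 l (pt s a)) _ t _ (r - Rabs t)); [lra| |auto].
      intros a Ha. apply IH; auto. apply (Rabs_near_lt t a (Rabs (a - t))); lra.
Qed.

Lemma fin_min N (P : nat -> R -> Prop) :
  (forall j d d', 0 < d' <= d -> P j d -> P j d') ->
  (forall j, (j < N)%nat -> exists d, 0 < d /\ P j d) ->
  exists d, 0 < d /\ forall j, (j < N)%nat -> P j d.
Proof.
  intros Hm. induction N; intros H.
  - exists 1; split; [lra| intros; lia].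
  - destruct IHN as [d1 [Hd1 E1]]; [intros j Hj; apply H; lia|].
    destruct (H N ltac:(lia)) as [d2 [Hd2 E2]].
    exists (Rmin d1 d2). split; [apply Rmin_pos; auto|]. intros j Hj.
    destruct (Nat.eq_dec j N) as [->|Hne].
    + apply (Hm N d2); auto. split; [apply Rmin_pos; auto| apply Rmin_r].
    + apply (Hm j d1); [split; [apply Rmin_pos; auto| apply Rmin_l]| apply E1; lia].
Qed.

Ltac nat_eqb := repeat match goal with
  | H : (_ =? _) = true |- _ => apply Nat.eqb_eq in H
  | H : (_ =? _) = false |- _ => apply Nat.eqb_neq in H end;
  simpl; try reflexivity; try lia.

Lemma J0_even m l : J0 (2*m) l = if Nat.eqb l (2*m+1) then -1 else 0.
Proof.
  unfold J0. rewrite Nat.div2_even, Nat.even_even.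
  destruct (Nat.Even_or_Odd l) as [[j ->]|[j ->]].
  - rewrite Nat.div2_even, Nat.even_even.
    destruct (Nat.eqb m j) eqn:E1; destruct (Nat.eqb (2*j) (2*m+1)) eqn:E; nat_eqb.
  - rewrite Nat.div2_odd', Nat.even_odd.
    destruct (Nat.eqb m j) eqn:E1; destruct (Nat.eqb (2*j+1) (2*m+1)) eqn:E; nat_eqb.
Qed.

Lemma J0_odd m l : J0 (2*m+1) l = if Nat.eqb l (2*m) then 1 else 0.
Proof.
  unfold J0. rewrite Nat.div2_odd', Nat.even_odd.
  destruct (Nat.Even_or_Odd l) as [[j ->]|[j ->]].
  - rewrite Nat.div2_even, Nat.even_even.
    destruct (Nat.eqb m j) eqn:E1; destruct (Nat.eqb (2*j) (2*m)) eqn:E; nat_eqb.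
  - rewrite Nat.div2_odd', Nat.even_odd.
    destruct (Nat.eqb m j) eqn:E1; destruct (Nat.eqb (2*j+1) (2*m)) eqn:E; nat_eqb.
Qed.

Lemma rsum_delta N j c f : (j < N)%nat ->
  rsum N (fun l => (if Nat.eqb l j then c else 0) * f l) = c * f j.
Proof.
  intros Hj.
  assert (Hbelow : forall M, (M <= j)%nat ->
            rsum M (fun l => (if Nat.eqb l j then c else 0) * f l) = 0).
  { induction M; intros HM; simpl; auto. rewrite IHM by lia.
    replace (Nat.eqb M j) with false by (symmetry; apply Nat.eqb_neq; lia). ring. }
  induction N; [lia|]. simpl.
  destruct (Nat.eqb N j) eqn:E.
  - apply Nat.eqb_eq in E; subst. rewrite Hbelow by lia. ring.
  - apply Nat.eqb_neq in E. rewrite IHN by lia. ring.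
Qed.

Lemma J0_apply n m v : (m < n)%nat ->
  rsum (2*n) (fun l => J0 (2*m) l * v l) = - v (2*m+1)%nat /\
  rsum (2*n) (fun l => J0 (2*m+1) l * v l) = v (2*m)%nat.
Proof.
  intros Hm. split.
  - rewrite (rsum_ext _ _ (fun l => (if Nat.eqb l (2*m+1) then -1 else 0) * v l))
      by (intros; rewrite J0_even; auto).
    rewrite rsum_delta by lia. ring.
  - rewrite (rsum_ext _ _ (fun l => (if Nat.eqb l (2*m) then 1 else 0) * v l))
      by (intros; rewrite J0_odd; auto).
    rewrite rsum_delta by lia. ring.
Qed.

Lemma cmul_assoc a b c : cmul a (cmul b c) = cmul (cmul a b) c.
Proof. destruct a, b, c; unfold cmul; simpl; f_equal; ring. Qed.

(* Expanding (s + i t)^N: the monomial of a list with q t-directions carries i^q. *)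
Lemma lsum_cpow N s t :
  lsum N (fun l => fst (cpow 0 1 (count_t l)) * mono l s t) = fst (cpow s t N) /\
  lsum N (fun l => snd (cpow 0 1 (count_t l)) * mono l s t) = snd (cpow s t N).
Proof.
  induction N as [|N [IH1 IH2]]; [simpl; unfold count_t; simpl; split; ring|].
  simpl lsum. simpl cpow.
  rewrite (lsum_ext N (fun m => fst (cpow 0 1 (count_t (m ++ [0%nat]))) * mono (m ++ [0%nat]) s t)
    (fun m => fst (cpow 0 1 (count_t m)) * mono m s t * s))
    by (intro m; rewrite count_app0, mono_app; simpl; ring).
  rewrite (lsum_ext N (fun m => fst (cpow 0 1 (count_t (m ++ [1%nat]))) * mono (m ++ [1%nat]) s t)
    (fun m => (-1) * (snd (cpow 0 1 (count_t m)) * mono m s t * t)))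
    by (intro m; rewrite count_app1, mono_app; simpl; unfold cmul; simpl; ring).
  rewrite (lsum_ext N (fun m => snd (cpow 0 1 (count_t (m ++ [0%nat]))) * mono (m ++ [0%nat]) s t)
    (fun m => snd (cpow 0 1 (count_t m)) * mono m s t * s))
    by (intro m; rewrite count_app0, mono_app; simpl; ring).
  rewrite (lsum_ext N (fun m => snd (cpow 0 1 (count_t (m ++ [1%nat]))) * mono (m ++ [1%nat]) s t)
    (fun m => fst (cpow 0 1 (count_t m)) * mono m s t * t))
    by (intro m; rewrite count_app1, mono_app; simpl; unfold cmul; simpl; ring).
  rewrite lsum_scal, !lsum_scal_r, IH1, IH2. unfold cmul; simpl. split; ring.
Qed.

Lemma cr_recursion (X Y : nat -> R) K :
  (forall q, (q < K)%nat -> X (S q) = - Y q /\ Y (S q) = X q) ->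
  forall q, (q <= K)%nat -> (X q, Y q) = cmul (X 0%nat, Y 0%nat) (cpow 0 1 q).
Proof.
  intros Hrec. induction q as [|q IH]; intros Hq.
  - unfold cmul; simpl. f_equal; ring.
  - simpl cpow. rewrite cmul_assoc, <- IH by lia.
    destruct (Hrec q ltac:(lia)) as [E1 E2]. rewrite E1, E2.
    unfold cmul; simpl. f_equal; ring.
Qed.

(** * Holomorphic maps with vanishing k-jet *)

Section HolomorphicMap.

Variables (n k : nat) (u : R -> R -> nat -> R) (J : (nat -> R) -> nat -> nat -> R)
  (r rho : R) (D : nat -> list nat -> (nat -> R) -> R).
Hypothesis hr : 0 < r.
Hypothesis hrho : 0 < rho.
Hypothesis HD : forall i, (i < 2 * n)%nat -> is_partials 2 (ball 2 r) (ucomp u i) (D i).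
Hypothesis Hu0 : forall i, (i < 2 * n)%nat -> u 0 0 i = 0.
Hypothesis HJ_smooth : forall i l, (i < 2 * n)%nat -> (l < 2 * n)%nat ->
  smooth_on (2 * n) (ball (2 * n) rho) (fun v => J v i l).
Hypothesis HJ0 : forall i l, (i < 2 * n)%nat -> (l < 2 * n)%nat -> J zerov i l = J0 i l.
Hypothesis Hhol : forall s t, Rabs s < r -> Rabs t < r ->
  forall us ut : nat -> R,
  (forall i, (i < 2 * n)%nat -> derivable_pt_lim (fun s' => u s' t i) s (us i)) ->
  (forall i, (i < 2 * n)%nat -> derivable_pt_lim (fun t' => u s t' i) t (ut i)) ->
  forall i, (i < 2 * n)%nat -> ut i = rsum (2 * n) (fun l => J (u s t) i l * us l).
Hypothesis Hjet : forall i, (i < 2 * n)%nat -> forall D,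
  is_partials 2 (ball 2 r) (ucomp u i) D ->
  forall l, (1 <= length l <= k)%nat -> Forall (fun q => (q < 2)%nat) l -> D l zerov = 0.

Definition G (i : nat) : list nat -> R -> R -> R := fun l s t => D i l (pt s t).

Lemma origin_in_square : Rabs 0 < r.
Proof. rewrite Rabs_R0; exact hr. Qed.

Lemma G_partials i : (i < 2 * n)%nat -> partials2 r (G i).
Proof. intros Hi. exact (partials2_of_is_partials r _ _ (HD i Hi)). Qed.

Lemma G_nil i s t : (i < 2 * n)%nat -> Rabs s < r -> Rabs t < r -> G i nil s t = u s t i.
Proof.
  intros Hi Hs Ht. unfold G. rewrite (proj1 (HD i Hi)) by (apply ball_pt; auto). reflexivity.
Qed.

Lemma G_jet i l : (i < 2 * n)%nat -> (length l <= k)%nat -> good l -> G i l 0 0 = 0.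
Proof.
  intros Hi Hl Hg. unfold G. rewrite pt00. destruct l as [|c l'].
  - rewrite (proj1 (HD i Hi)) by (rewrite <- pt00; apply ball_pt; apply origin_in_square).
    apply Hu0; auto.
  - apply (Hjet i Hi (D i) (HD i Hi)); auto. simpl in *; lia.
Qed.

Lemma G_origin i D' l : (i < 2 * n)%nat -> is_partials 2 (ball 2 r) (ucomp u i) D' ->
  good l -> D' l zerov = G i l 0 0.
Proof.
  intros Hi HD' Hg. unfold G. rewrite <- pt00.
  apply (is_partials_unique r (ucomp u i)); auto; apply origin_in_square.
Qed.

Lemma G_holomorphic i s t : (i < 2 * n)%nat -> Rabs s < r -> Rabs t < r ->
  G i [1%nat] s t = rsum (2 * n) (fun l => J (u s t) i l * G l [0%nat] s t).
Proof.
  intros Hi Hs Ht.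
  apply (Hhol s t Hs Ht (fun l => G l [0%nat] s t) (fun l => G l [1%nat] s t)); auto;
    intros j Hj; destruct (G_partials j Hj nil s t Hs Ht) as [D0 [D1 _]].
  - apply (derivable_pt_lim_local (fun y => G j nil y t) _ s _ (r - Rabs s)); [lra| |exact D0].
    intros y Hy. apply G_nil; auto. apply (Rabs_near_lt s y (Rabs (y - s))); lra.
  - apply (derivable_pt_lim_local (fun y => G j nil s y) _ t _ (r - Rabs t)); [lra| |exact D1].
    intros y Hy. apply G_nil; auto. apply (Rabs_near_lt t y (Rabs (y - t))); lra.
Qed.

Lemma u_near_zero j e : (j < 2 * n)%nat -> 0 < e ->
  exists d, 0 < d /\ (d <= r /\ forall s t, Rabs s < d -> Rabs t < d -> Rabs (u s t j) < e).
Proof.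
  intros Hj He.
  pose proof origin_in_square as H0.
  destruct (proj2 (proj2 (G_partials j Hj nil 0 0 H0 H0)) e He) as [d [Hd Hc]].
  exists (Rmin d r). split; [apply Rmin_pos; auto|]. split; [apply Rmin_r|].
  intros s t Hs Ht.
  apply Rmin_Rgt in Hs as [Hs Hsr]; apply Rmin_Rgt in Ht as [Ht Htr].
  rewrite <- (G_nil j s t Hj Hsr Htr).
  replace (G j [] s t) with (G j [] s t - G j [] 0 0)
    by (rewrite (G_jet j nil Hj ltac:(simpl; lia) ltac:(constructor)); ring).
  apply Hc; rewrite Rminus_0_r; auto.
Qed.

Lemma J_near_J0 i l : (i < 2 * n)%nat -> (l < 2 * n)%nat ->
  small 0 (fun s t => J (u s t) i l - J0 i l).
Proof.
  intros Hi Hl eps Heps.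
  destruct (HJ_smooth i l Hi Hl) as [DJ [DJ0 [_ DJc]]].
  assert (Hz : ball (2 * n) rho zerov) by (intros j _; unfold zerov; rewrite Rabs_R0; auto).
  destruct (DJc nil zerov Hz eps Heps) as [dJ [HdJ EJ]].
  assert (HdJ' : 0 < Rmin dJ rho) by (apply Rmin_pos; auto).
  destruct (fin_min (2 * n) (fun j d => d <= r /\
      forall s t, Rabs s < d -> Rabs t < d -> Rabs (u s t j) < Rmin dJ rho)) as [d [Hd Ed]].
  { intros j d d' [Hd' Hdd] [Hr' P]. split; [lra|]. intros s t Hs Ht. apply P; lra. }
  { intros j Hj. apply u_near_zero; auto. }
  exists d. split; auto. intros s t Hs Ht. simpl. rewrite Rmult_1_r.
  assert (Hu : forall j, (j < 2 * n)%nat -> Rabs (u s t j) < dJ /\ Rabs (u s t j) < rho)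
    by (intros j Hj; apply Rmin_Rgt, (proj2 (Ed j Hj)); auto).
  assert (Hb : ball (2 * n) rho (u s t)) by (intros j Hj; apply Hu; auto).
  rewrite <- (DJ0 (u s t) Hb), <- (HJ0 i l Hi Hl), <- (DJ0 zerov Hz).
  left. apply EJ. intros j Hj. unfold zerov. rewrite Rminus_0_r. apply Hu; auto.
Qed.

(* The Cauchy-Riemann defect of u with respect to J0 (in the row i of
   d/dt u - J0 d/ds u, written d/dt u_i + c d/ds u_i') is o(|z|^k). *)
Lemma cr_defect_small i i' c : (i < 2 * n)%nat -> (i' < 2 * n)%nat ->
  (forall v, rsum (2 * n) (fun l => J0 i l * v l) = - c * v i') ->
  small k (fun s t => G i [1%nat] s t + c * G i' [0%nat] s t).
Proof.
  intros Hi Hi' HJ0i.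
  apply (small_ext r k (fun s t => rsum (2 * n)
           (fun l => (J (u s t) i l - J0 i l) * G l [0%nat] s t))); auto.
  - intros s t Hs Ht. rewrite (G_holomorphic i s t Hi Hs Ht).
    rewrite (rsum_ext _ _ (fun l => J (u s t) i l * G l [0%nat] s t - J0 i l * G l [0%nat] s t))
      by (intros; ring).
    rewrite rsum_minus, (HJ0i (fun l => G l [0%nat] s t)). ring.
  - apply small_rsum. intros l Hl.
    apply (small_mul k (fun s t => J (u s t) i l - J0 i l) (G l [0%nat])).
    + apply J_near_J0; auto.
    + apply (taylor_big r (shift 0 (G l)) k hr (partials2_shift r _ 0 (G_partials l Hl))).
      intros l' Hl' Hg'. apply G_jet; auto; [rewrite length_app; simpl; lia | apply good_app; auto].
Qed.

(* Hence the Cauchy-Riemann equations hold for the derivatives of order k+1 at 0. *)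
Lemma cr_defect_jet i i' c : (i < 2 * n)%nat -> (i' < 2 * n)%nat ->
  (forall v, rsum (2 * n) (fun l => J0 i l * v l) = - c * v i') ->
  forall l, length l = k -> good l -> G i (l ++ [1%nat]) 0 0 + c * G i' (l ++ [0%nat]) 0 0 = 0.
Proof.
  intros Hi Hi' HJ0i.
  apply (small_derivatives_vanish r (fun l s t => shift 1 (G i) l s t + c * shift 0 (G i') l s t));
    auto.
  - apply partials2_comb; apply partials2_shift; apply G_partials; auto.
  - intros l Hl Hg. unfold shift.
    rewrite !G_jet; auto; try ring; try (apply good_app; auto); rewrite length_app; simpl; lia.
  - apply cr_defect_small; auto.
Qed.

Lemma cauchy_riemann m l : (m < n)%nat -> length l = k -> good l ->
  G (2*m) (l ++ [1%nat]) 0 0 = - G (2*m+1) (l ++ [0%nat]) 0 0 /\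
  G (2*m+1) (l ++ [1%nat]) 0 0 = G (2*m) (l ++ [0%nat]) 0 0.
Proof.
  intros Hm Hl Hg.
  pose proof (cr_defect_jet (2*m) (2*m+1) 1 ltac:(lia) ltac:(lia)) as Cx.
  pose proof (cr_defect_jet (2*m+1) (2*m) (-1) ltac:(lia) ltac:(lia)) as Cy.
  specialize (Cx ltac:(intro v; rewrite (proj1 (J0_apply n m v Hm)); ring) l Hl Hg).
  specialize (Cy ltac:(intro v; rewrite (proj2 (J0_apply n m v Hm)); ring) l Hl Hg).
  split; lra.
Qed.

Lemma G_canon i l : (i < 2 * n)%nat -> good l ->
  G i l 0 0 = G i (canon (length l) (count_t l)) 0 0.
Proof.
  intros Hi Hg. apply (agree_canon r (G i) (G_partials i Hi) l Hg); apply origin_in_square.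
Qed.

(* The coefficient a = (d/ds)^(k+1) u(0) / (k+1)!, in the coordinates (x_m, y_m). *)
Definition coef (j : nat) : R := G j (canon (k+1) 0) 0 0 / INR (fact (k+1)).

Lemma principal_jet m l : (m < n)%nat -> good l -> length l = (k+1)%nat ->
  G (2*m) l 0 0 = INR (fact (k+1)) * fst (cmul (coef (2*m), coef (2*m+1)) (cpow 0 1 (count_t l))) /\
  G (2*m+1) l 0 0 = INR (fact (k+1)) * snd (cmul (coef (2*m), coef (2*m+1)) (cpow 0 1 (count_t l))).
Proof.
  intros Hm Hg Hl.
  set (X := fun q => G (2*m) (canon (k+1) q) 0 0).
  set (Y := fun q => G (2*m+1) (canon (k+1) q) 0 0).
  assert (Hrec : forall q, (q < k+1)%nat -> X (S q) = - Y q /\ Y (S q) = X q).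
  { intros q Hq.
    assert (G1 : good (canon k q ++ [1%nat])) by (apply good_app; [apply canon_good| lia]).
    assert (G0 : good (canon k q ++ [0%nat])) by (apply good_app; [apply canon_good| lia]).
    destruct (cauchy_riemann m (canon k q) Hm (canon_length k q ltac:(lia)) (canon_good k q))
      as [C1 C2].
    rewrite (G_canon (2*m) _ ltac:(lia) G1), (G_canon (2*m+1) _ ltac:(lia) G0) in C1.
    rewrite (G_canon (2*m+1) _ ltac:(lia) G1), (G_canon (2*m) _ ltac:(lia) G0) in C2.
    rewrite !length_app, canon_length, count_app1, count_app0, canon_count in C1, C2 by lia.
    simpl length in C1, C2. replace (k + 1)%nat with (S k) by lia. split; auto. }
  pose proof (count_le l Hg) as Hc.
  pose proof (cr_recursion X Y (k+1) Hrec (count_t l) ltac:(lia)) as E.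
  assert (HF : 0 < INR (fact (k+1))) by (apply lt_0_INR, lt_O_fact).
  rewrite (G_canon (2*m) l ltac:(lia) Hg), (G_canon (2*m+1) l ltac:(lia) Hg), Hl.
  change (G (2*m) (canon (k+1) (count_t l)) 0 0) with (X (count_t l)).
  change (G (2*m+1) (canon (k+1) (count_t l)) 0 0) with (Y (count_t l)).
  pose proof (f_equal fst E) as EX; pose proof (f_equal snd E) as EY.
  simpl fst in EX; simpl snd in EY. rewrite EX, EY.
  unfold coef, X, Y, cmul. simpl. split; field; lra.
Qed.

Lemma taylor_principal m s t : (m < n)%nat ->
  taylor (k+1) (G (2*m)) s t = fst (cmul (coef (2*m), coef (2*m+1)) (cpow s t (k+1))) /\
  taylor (k+1) (G (2*m+1)) s t = snd (cmul (coef (2*m), coef (2*m+1)) (cpow s t (k+1))).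
Proof.
  intros Hm. destruct (lsum_cpow (k+1) s t) as [L1 L2].
  assert (HF : 0 < INR (fact (k+1))) by (apply lt_0_INR, lt_O_fact).
  unfold taylor. split.
  - rewrite (lsum_ext_good (k+1) _ (fun l => INR (fact (k+1)) *
        (coef (2*m) * (fst (cpow 0 1 (count_t l)) * mono l s t)
         + (- coef (2*m+1)) * (snd (cpow 0 1 (count_t l)) * mono l s t)))).
    + rewrite lsum_scal, lsum_plus, !lsum_scal, L1, L2. unfold cmul; simpl. field; lra.
    + intros l Hl Hg. rewrite (proj1 (principal_jet m l Hm Hg Hl)). unfold cmul; simpl. ring.
  - rewrite (lsum_ext_good (k+1) _ (fun l => INR (fact (k+1)) *
        (coef (2*m) * (snd (cpow 0 1 (count_t l)) * mono l s t)
         + coef (2*m+1) * (fst (cpow 0 1 (count_t l)) * mono l s t)))).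
    + rewrite lsum_scal, lsum_plus, !lsum_scal, L1, L2. unfold cmul; simpl. field; lra.
    + intros l Hl Hg. rewrite (proj2 (principal_jet m l Hm Hg Hl)). unfold cmul; simpl. ring.
Qed.

Lemma principal_expansion m b : (m < n)%nat -> (b < 2)%nat ->
  small (k+1) (fun s t => u s t (2*m+b)%nat
    - (if Nat.eqb b 0 then fst else snd) (cmul (coef (2*m), coef (2*m+1)) (cpow s t (k+1)))).
Proof.
  intros Hm Hb.
  assert (Hi : (2*m+b < 2*n)%nat) by lia.
  apply (small_ext r (k+1) (fun s t => G (2*m+b) nil s t - taylor (k+1) (G (2*m+b)) s t)); auto.
  - intros s t Hs Ht. rewrite G_nil by auto.
    destruct (taylor_principal m s t Hm) as [T0 T1].
    destruct b as [|[|b]]; [rewrite Nat.add_0_r in *; rewrite T0 | rewrite T1 | lia]; reflexivity.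
  - apply (taylor_expansion (k+1) r); auto; [apply G_partials; auto|].
    intros l Hl Hg. apply G_jet; auto. lia.
Qed.

Lemma holomorphic_expansion eps : 0 < eps -> exists delta, 0 < delta /\
  forall s t, sqrt (s * s + t * t) < delta -> forall m, (m < n)%nat ->
    Rabs (u s t (2 * m)%nat - fst (cmul (coef (2 * m), coef (2 * m + 1)) (cpow s t (k + 1))))
      <= eps * (sqrt (s * s + t * t)) ^ (k + 1) /\
    Rabs (u s t (2 * m + 1)%nat - snd (cmul (coef (2 * m), coef (2 * m + 1)) (cpow s t (k + 1))))
      <= eps * (sqrt (s * s + t * t)) ^ (k + 1).
Proof.
  intros Heps.
  destruct (fin_min n (fun m d => forall s t, sqrt (s * s + t * t) < d ->
    Rabs (u s t (2 * m)%nat - fst (cmul (coef (2 * m), coef (2 * m + 1)) (cpow s t (k + 1))))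
      <= eps * (sqrt (s * s + t * t)) ^ (k + 1) /\
    Rabs (u s t (2 * m + 1)%nat - snd (cmul (coef (2 * m), coef (2 * m + 1)) (cpow s t (k + 1))))
      <= eps * (sqrt (s * s + t * t)) ^ (k + 1))) as [d [Hd Ed]].
  - intros m d d' Hd' P s t Hst. apply P. lra.
  - intros m Hm.
    destruct (small_euclid _ _ (principal_expansion m 0 Hm ltac:(lia)) eps Heps) as [d0 [Hd0 E0]].
    destruct (small_euclid _ _ (principal_expansion m 1 Hm ltac:(lia)) eps Heps) as [d1 [Hd1 E1]].
    exists (Rmin d0 d1). split; [apply Rmin_pos; auto|]. intros s t Hst.
    apply Rmin_Rgt in Hst as [H0 H1].
    specialize (E0 s t H0). specialize (E1 s t H1). rewrite Nat.add_0_r in E0. auto.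
  - exists d. split; [exact Hd|]. intros s t Hst m Hm. apply Ed; auto.
Qed.

Lemma derivatives_at_origin m : (m < n)%nat -> forall Dx Dy,
  is_partials 2 (ball 2 r) (ucomp u (2 * m)) Dx ->
  is_partials 2 (ball 2 r) (ucomp u (2 * m + 1)) Dy ->
  forall l, length l = (k + 1)%nat -> good l ->
    Dx l zerov = INR (fact (k + 1))
      * fst (cmul (coef (2 * m), coef (2 * m + 1)) (cpow 0 1 (count_t l))) /\
    Dy l zerov = INR (fact (k + 1))
      * snd (cmul (coef (2 * m), coef (2 * m + 1)) (cpow 0 1 (count_t l))).
Proof.
  intros Hm Dx Dy HDx HDy l Hl Hg.
  rewrite (G_origin (2*m) Dx l), (G_origin (2*m+1) Dy l) by (auto; lia).
  apply principal_jet; auto.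
Qed.

Lemma principal_jet_holomorphic m : (m < n)%nat -> forall Dx Dy,
  is_partials 2 (ball 2 r) (ucomp u (2 * m)) Dx ->
  is_partials 2 (ball 2 r) (ucomp u (2 * m + 1)) Dy ->
  forall l, length l = k -> good l ->
    Dx (1%nat :: l) zerov = - Dy (0%nat :: l) zerov /\
    Dy (1%nat :: l) zerov = Dx (0%nat :: l) zerov.
Proof.
  intros Hm Dx Dy HDx HDy l Hl Hg.
  assert (Hc : forall c, (c < 2)%nat -> good (c :: l)) by (intros; constructor; auto).
  rewrite !(G_origin (2*m) Dx), !(G_origin (2*m+1) Dy) by (auto; lia).
  assert (Hlast : forall i c, (i < 2 * n)%nat -> (c < 2)%nat ->
            G i (c :: l) 0 0 = G i (l ++ [c]) 0 0).
  { intros i c Hi Hc2. apply (agree_count r (G i) (G_partials i Hi)); try apply origin_in_square.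
    - constructor; auto.
    - apply good_app; auto.
    - rewrite length_app; simpl; lia.
    - destruct c as [|[|c]]; try lia.
      + rewrite count_t_0, count_app0; auto.
      + rewrite count_t_1, count_app1; auto. }
  rewrite !Hlast by lia. apply cauchy_riemann; auto.
Qed.

End HolomorphicMap.

Theorem mainTheorem1
  (n k : nat) (hk : (1 <= k)%nat)
  (u : R -> R -> nat -> R) (J : (nat -> R) -> nat -> nat -> R)
  (r rho : R) (hr : 0 < r) (hrho : 0 < rho)
  (* u is smooth on the coordinate disc (cube) around z0 = 0 *)
  (Hu_smooth : forall i, (i < 2 * n)%nat -> smooth_on 2 (ball 2 r) (ucomp u i))
  (* u maps the disc into the coordinate chart of M *)
  (Hu_maps : forall s t, Rabs s < r -> Rabs t < r ->
     forall i, (i < 2 * n)%nat -> Rabs (u s t i) < rho)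
  (* coordinates on M centred at p0 = u(z0) *)
  (Hu0 : forall i, (i < 2 * n)%nat -> u 0 0 i = 0)
  (* J is a smooth almost complex structure on the chart of M *)
  (HJ_loc : forall v w, (forall i, (i < 2 * n)%nat -> v i = w i) ->
     forall i l, J v i l = J w i l)
  (HJ_smooth : forall i l, (i < 2 * n)%nat -> (l < 2 * n)%nat ->
     smooth_on (2 * n) (ball (2 * n) rho) (fun v => J v i l))
  (HJ_sq : forall v, ball (2 * n) rho v -> forall i l,
     (i < 2 * n)%nat -> (l < 2 * n)%nat ->
     rsum (2 * n) (fun p => J v i p * J v p l) = - deltaR i l)
  (* J at p0 is standard in the coordinates w_m = x_m + i y_m *)
  (HJ0 : forall i l, (i < 2 * n)%nat -> (l < 2 * n)%nat ->
     J zerov i l = J0 i l)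
  (* u is (j,J)-holomorphic: du(j d/ds) = du(d/dt) = J(u) du(d/ds) *)
  (Hhol : forall s t, Rabs s < r -> Rabs t < r ->
     forall us ut : nat -> R,
     (forall i, (i < 2 * n)%nat -> derivable_pt_lim (fun s' => u s' t i) s (us i)) ->
     (forall i, (i < 2 * n)%nat -> derivable_pt_lim (fun t' => u s t' i) t (ut i)) ->
     forall i, (i < 2 * n)%nat ->
       ut i = rsum (2 * n) (fun l => J (u s t) i l * us l))
  (* j^k u(z0) = 0: all partial derivatives of orders 1..k vanish at 0 *)
  (Hjet : forall i, (i < 2 * n)%nat -> forall D,
     is_partials 2 (ball 2 r) (ucomp u i) D ->
     forall l, (1 <= length l <= k)%nat -> Forall (fun q => (q < 2)%nat) l ->
     D l zerov = 0) :
  exists a : nat -> R,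
    (* u(z) = a z^(k+1) + o(|z|^(k+1)), with a_m = a(2m) + i a(2m+1) *)
    (forall eps, 0 < eps -> exists delta, 0 < delta /\
      forall s t, sqrt (s * s + t * t) < delta ->
      forall m, (m < n)%nat ->
        Rabs (u s t (2 * m)%nat
              - fst (cmul (a (2 * m)%nat, a (2 * m + 1)%nat) (cpow s t (k + 1))))
          <= eps * (sqrt (s * s + t * t)) ^ (k + 1) /\
        Rabs (u s t (2 * m + 1)%nat
              - snd (cmul (a (2 * m)%nat, a (2 * m + 1)%nat) (cpow s t (k + 1))))
          <= eps * (sqrt (s * s + t * t)) ^ (k + 1)) /\
    (* equivalently d^(k+1)u(z0) = (k+1)! a . dz^(k+1):
       d^(k+1)u(z0)(d/ds,...,d/dt,...) = (k+1)! a i^q, q = number of d/dt *)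
    (forall m, (m < n)%nat -> forall Dx Dy,
      is_partials 2 (ball 2 r) (ucomp u (2 * m)) Dx ->
      is_partials 2 (ball 2 r) (ucomp u (2 * m + 1)) Dy ->
      forall l, length l = (k + 1)%nat -> Forall (fun q => (q < 2)%nat) l ->
        Dx l zerov = INR (fact (k + 1))
          * fst (cmul (a (2 * m)%nat, a (2 * m + 1)%nat) (cpow 0 1 (count_t l))) /\
        Dy l zerov = INR (fact (k + 1))
          * snd (cmul (a (2 * m)%nat, a (2 * m + 1)%nat) (cpow 0 1 (count_t l)))) /\
    (* in particular the principal jet is holomorphic:
       d^(k+1)u(z0)(j v, ...) = J0 d^(k+1)u(z0)(v, ...) *)
    (forall m, (m < n)%nat -> forall Dx Dy,
      is_partials 2 (ball 2 r) (ucomp u (2 * m)) Dx ->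
      is_partials 2 (ball 2 r) (ucomp u (2 * m + 1)) Dy ->
      forall l, length l = k -> Forall (fun q => (q < 2)%nat) l ->
        Dx (1%nat :: l) zerov = - Dy (0%nat :: l) zerov /\
        Dy (1%nat :: l) zerov = Dx (0%nat :: l) zerov).
Proof.
  assert (Hfam : forall i, exists Di, (i < 2 * n)%nat -> is_partials 2 (ball 2 r) (ucomp u i) Di).
  { intro i. destruct (Nat.lt_ge_cases i (2 * n)) as [Hi|Hi].
    - destruct (Hu_smooth i Hi) as [Di HDi]. exists Di; auto.
    - exists (fun _ _ => 0). intro; lia. }
  destruct (functional_choice _ Hfam) as [D HD].
  exists (coef k D). split; [|split].
  - exact (holomorphic_expansion n k u J r rho D hr hrho HD Hu0 HJ_smooth HJ0 Hhol Hjet).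
  - exact (derivatives_at_origin n k u J r rho D hr hrho HD Hu0 HJ_smooth HJ0 Hhol Hjet).
  - exact (principal_jet_holomorphic n k u J r rho D hr hrho HD Hu0 HJ_smooth HJ0 Hhol Hjet).
Qed.
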